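(* Let $n$ be a positive integer and let $D(n)=[d_{i,j}]_{i,j=1}^n$ be the matrix with $d_{i,j}=F_i$ if $i\mid j$ and $d_{i,j}=0$ otherwise. Then $D(n)$ is invertible and $D(n)^{-1}=[\tilde d_{i,j}]_{i,j=1}^n$, where \[ \tilde d_{i,j}=\begin{cases}\dfrac{1}{F_j}\,\mu\!\left(\dfrac{j}{i}\right) & \text{if } i\mid j,\\[2mm] 0 & \text{otherwise}.\end{cases} \]
   Context: The Fibonacci numbers are $F_1=F_2=1$, $F_n=F_{n-1}+F_{n-2}$ for $n\ge 3$. $\mu$ denotes the Möbius function: $\mu(1)=1$, $\mu(j)=0$ if $j$ has a repeated prime factor, and $\mu(j)=(-1)^k$ if $j$ is a product of $k$ distinct primes. *)

From HB Require Import structures.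
From mathcomp Require Import all_boot all_order all_algebra.
Set Implicit Arguments. Unset Strict Implicit. Unset Printing Implicit Defensive.
Import Order.TTheory GRing.Theory Num.Theory.

Fixpoint fib (n : nat) : nat :=
  match n with
  | 0 => 0
  | 1 => 1
  | (m.+1 as k).+1 => fib k + fib m
  end.

Definition mobius (n : nat) : int :=
  if n == 0%N then 0%R
  else if all (fun p => logn p n <= 1) (primes n) then ((-1) ^+ size (primes n))%R
  else 0%R.

Local Open Scope ring_scope.

(* D(n): rows/columns indexed by i : 'I_n standing for i+1 in {1..n}. *)
Definition Dmat (n : nat) : 'M[rat]_n :=
  \matrix_(i < n, j < n) if (i.+1 %| j.+1)%N then (fib i.+1)%:R else 0.

Definition Dinv (n : nat) : 'M[rat]_n :=
  \matrix_(i < n, j < n)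
    if (i.+1 %| j.+1)%N then ((fib j.+1)%:R)^-1 * (mobius (j.+1 %/ i.+1))%:~R else 0.

Lemma fib_check : [seq fib k | k <- iota 1 8] = [:: 1; 1; 2; 3; 5; 8; 13; 21]%N.
Proof. by []. Qed.
Lemma mobius_check : [seq mobius k | k <- iota 1 12] = [:: 1; -1; -1; 0; -1; 1; -1; 0; 0; 1; -1; 0]%R.
Proof. by []. Qed.

From HB Require Import structures.
From mathcomp Require Import all_boot all_order all_algebra.
Set Implicit Arguments.
Unset Strict Implicit.
Unset Printing Implicit Defensive.

Import Order.TTheory GRing.Theory Num.Theory.

(* After the Fibonacci factors cancel, the (i, k) entry of Dinv * D is
   sum_{i | j | k} mu(j / i), i.e. sum_{e | k / i} mu(e) when i | k and 0
   otherwise; by the identity sum_{d | m} mu(d) = [m = 1] this is [i = k].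
   A one-sided inverse of a square matrix is two-sided. *)

Lemma mobius_sqr_dvd p d : prime p -> (p ^ 2 %| d)%N -> mobius d = 0%R.
Proof.
move=> p_pr p2d; rewrite /mobius; have [//|d_neq0] := eqVneq d 0%N.
have d_gt0 : (0 < d)%N by rewrite lt0n.
case: allP => // sqfree_d.
have p_d : p \in primes d.
  by rewrite mem_primes p_pr d_gt0 (dvdn_trans _ p2d) // dvdn_exp.
move: (sqfree_d p p_d) p2d; rewrite (pfactor_dvdn _ p_pr d_gt0).
by case: (logn p d) => [|[|]].
Qed.

Lemma mobiusM_prime p d : prime p -> ~~ (p %| d)%N -> (0 < d)%N ->
  mobius (p * d) = (- mobius d)%R.
Proof.
move=> p_pr pNd d_gt0; have p_gt0 := prime_gt0 p_pr.
have pd_gt0 : (0 < p * d)%N by rewrite muln_gt0 p_gt0.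
have primes_pd : perm_eq (primes (p * d)) (p :: primes d).
  apply: uniq_perm; rewrite ?primes_uniq //=.
    by rewrite primes_uniq mem_primes (negbTE pNd) !andbF.
  by move=> q; rewrite primesM // primes_prime // inE in_cons.
have logp_d : logn p d = 0%N by rewrite logn_coprime // prime_coprime.
rewrite /mobius !gtn_eqF // (perm_all _ primes_pd) (perm_size primes_pd) /=.
rewrite lognM // logn_prime // eqxx logp_d.
rewrite (@eq_in_all _ _ (fun q => logn q d <= 1)%N); last first.
  move=> q; rewrite mem_primes => /and3P[q_pr _ q_d].
  rewrite lognM // logn_prime //.
  by case: eqP => // q_p; rewrite -q_p q_d in pNd.
by case: all; rewrite ?oppr0 // exprS mulN1r.
Qed.

Lemma perm_divisors_mul_dvd d m : (0 < d)%N -> (0 < m)%N ->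
  perm_eq [seq e <- divisors (d * m) | (d %| e)%N]
          [seq d * e | e <- divisors m]%N.
Proof.
move=> d_gt0 m_gt0; have dm_gt0 : (0 < d * m)%N by rewrite muln_gt0 d_gt0.
apply: uniq_perm; first by rewrite filter_uniq ?divisors_uniq.
  rewrite map_inj_uniq ?divisors_uniq // => x y /eqP.
  by rewrite eqn_pmul2l // => /eqP.
move=> e; rewrite mem_filter -dvdn_divisors //.
apply/andP/mapP => [[/dvdnP[f def_e] e_dm] | [f f_m ->]].
  exists f; last by rewrite def_e mulnC.
  by rewrite -dvdn_divisors // -(dvdn_pmul2l d_gt0) mulnC -def_e.
by rewrite dvdn_mulr // dvdn_pmul2l // dvdn_divisors.
Qed.

Lemma perm_divisors_mul_prime_Ndvd p m : prime p -> (0 < m)%N ->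
  perm_eq [seq e <- divisors (p * m) | ~~ (p %| e)%N]
          [seq e <- divisors m | ~~ (p %| e)%N].
Proof.
move=> p_pr m_gt0; have pm_gt0 : (0 < p * m)%N by rewrite muln_gt0 prime_gt0.
apply: uniq_perm; rewrite ?filter_uniq ?divisors_uniq // => e.
rewrite !mem_filter -!dvdn_divisors //; case: (boolP (p %| e)%N) => //= pNe.
by rewrite Gauss_dvdr // coprime_sym prime_coprime.
Qed.

Local Open Scope ring_scope.

(* For a prime factor p of m, the divisors e and p * e of m with p not
   dividing e have opposite Moebius values; the others contribute 0. *)
Lemma sum_mobius_divisors m : (0 < m)%N ->
  \sum_(d <- divisors m) mobius d = (m == 1%N)%:R.
Proof.
move=> m_gt0; have [-> | m_neq1] := eqVneq m 1%N; first by rewrite big_seq1.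
have m_gt1 : (1 < m)%N by rewrite ltn_neqAle eq_sym m_neq1.
have [p p_pr [m' def_m]] : exists2 p, prime p & exists m', m = (p * m')%N.
  exists (pdiv m); first exact: pdiv_prime.
  by exists (m %/ pdiv m)%N; rewrite mulnC divnK ?pdiv_dvd.
have p_gt0 := prime_gt0 p_pr.
have m'_gt0 : (0 < m')%N by move: m_gt0; rewrite def_m muln_gt0 => /andP[].
have sum_dvd : \sum_(d <- divisors (p * m') | (p %| d)%N) mobius d
              = \sum_(e <- divisors m') mobius (p * e)%N.
  rewrite -big_filter (perm_big _ (perm_divisors_mul_dvd p_gt0 m'_gt0)).
  by rewrite big_map.
have sum_Ndvd : \sum_(d <- divisors (p * m') | ~~ (p %| d)%N) mobius d
              = \sum_(e <- divisors m' | ~~ (p %| e)%N) mobius e.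
  rewrite -[LHS]big_filter -[RHS]big_filter.
  exact: perm_big (perm_divisors_mul_prime_Ndvd p_pr m'_gt0).
rewrite def_m (bigID (dvdn p)) /= sum_dvd sum_Ndvd (bigID (dvdn p)) /=.
rewrite big1 ?add0r => [|e /dvdnP[k ->]]; last first.
  by apply: (@mobius_sqr_dvd p) => //; rewrite mulnCA dvdn_mull.
rewrite big_seq_cond (eq_bigr (fun e => - mobius e)) => [|e /andP[e_m pNe]].
  by rewrite sumrN -big_seq_cond addNr.
by rewrite mobiusM_prime // (dvdn_gt0 m'_gt0) // dvdn_divisors.
Qed.

Lemma sum_mobius_dvd_divn i k : (0 < i)%N -> (0 < k)%N ->
  \sum_(d <- divisors k | (i %| d)%N) mobius (d %/ i) = (i == k)%:R.
Proof.
move=> i_gt0 k_gt0.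
have [/dvdnP[m def_k] | iNk] := boolP (i %| k)%N; last first.
  rewrite big_seq_cond big1 => [|d /andP[d_k i_d]].
    by case: eqP iNk => // ->; rewrite dvdnn.
  by rewrite (dvdn_trans i_d) ?dvdn_divisors in iNk.
rewrite mulnC in def_k; rewrite def_k.
have m_gt0 : (0 < m)%N by move: k_gt0; rewrite def_k muln_gt0 => /andP[].
rewrite -big_filter (perm_big _ (perm_divisors_mul_dvd i_gt0 m_gt0)) big_map.
under eq_bigr do rewrite mulKn //.
by rewrite sum_mobius_divisors // -{1}[i]muln1 eqn_pmul2l // eq_sym.
Qed.

Lemma sum_ord_divisors (R : nmodType) n k (F : nat -> R) :
  (0 < k)%N -> (k <= n)%N ->
  \sum_(j < n | (j.+1 %| k)%N) F j.+1 = \sum_(d <- divisors k) F d.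
Proof.
move=> k_gt0 k_le_n.
rewrite -(big_mkord (fun j => j.+1 %| k)%N (fun j => F j.+1)).
rewrite /index_iota subn0
  -(big_map succn (fun d => d %| k)%N F) -(iotaDl 1) -big_filter.
apply/perm_big/uniq_perm; rewrite ?filter_uniq ?iota_uniq ?divisors_uniq //.
move=> d; rewrite mem_filter mem_iota -dvdn_divisors //.
have [d_k | //] := boolP (d %| k)%N; rewrite /= add1n ltnS (dvdn_gt0 k_gt0) //.
exact: leq_trans (dvdn_leq k_gt0 d_k) k_le_n.
Qed.

Lemma fib_gt0 k : (0 < k)%N -> (0 < fib k)%N.
Proof.
case: k => // k _; suff [] : (0 < fib k.+1)%N /\ (0 < fib k.+2)%N by [].
by elim: k => [|k [_ fib_k2]] //; split; rewrite // addn_gt0 fib_k2.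
Qed.

Lemma mulmx_Dinv_Dmat n : Dinv n *m Dmat n = 1%:M.
Proof.
apply/matrixP => i k; rewrite !mxE.
pose g d : int := if (i.+1 %| d)%N then mobius (d %/ i.+1) else 0.
have entry j :
    Dinv n i j * Dmat n j k = (if (j.+1 %| k.+1)%N then g j.+1 else 0)%:~R.
  have fib_neq0 : (fib j.+1)%:R != 0 :> rat by rewrite pnatr_eq0 -lt0n fib_gt0.
  rewrite !mxE /g; case: (i.+1 %| j.+1)%N; case: (j.+1 %| k.+1)%N;
    by rewrite ?mulr0 ?mul0r // mulrC mulrA mulfV ?mul1r.
under eq_bigr do rewrite entry.
rewrite -rmorph_sum -big_mkcond /= (sum_ord_divisors g) ?ltn_ord //.
by rewrite /g -big_mkcond /= sum_mobius_dvd_divn // eqSS mulrz_nat.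
Qed.

Theorem lemma1 (n : nat) (hn : (0 < n)%N) :
  Dmat n \in unitmx /\ invmx (Dmat n) = Dinv n.
Proof.
have mulmx_Dmat_Dinv := mulmx1C (mulmx_Dinv_Dmat n).
have [Dmat_unit _] := mulmx1_unit mulmx_Dmat_Dinv.
by split; rewrite // -[Dinv n](mulKmx Dmat_unit) mulmx_Dmat_Dinv mulmx1.
Qed.
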